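(* If $0\le p\le t=\frac12$, then bold play is optimal, i.e. $\pi(p,\frac12)=p+(1-p)p$, attained by $c_1=c_2=\frac12$, $c_i=0$ for $i\ge3$.
   Context: Let $\beta_1,\beta_2,\ldots$ be independent Bernoulli random variables with success probability $p$. A stake sequence is a sequence $\gamma=(c_1,c_2,\ldots)$ of non-negative reals with $c_1\ge c_2\ge\cdots$ and $\sum_i c_i=1$; write $S_\gamma=\sum_i c_i\beta_i$. For $0\le p\le t\le 1$ define $\pi(p,t)=\sup\{\mathbf P(S_\gamma\ge t)\mid \gamma \text{ a stake sequence}\}$. Bold play for threshold $t$ is the stake sequence with $c_i=\frac1m$ for $i\le m$ and $c_i=0$ for $i>m$, where $m=\lfloor 1/t\rfloor$; it is optimal if it attains $\pi(p,t)$. *)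

From HB Require Import structures.
From mathcomp Require Import all_boot all_order all_algebra.
From mathcomp Require Import all_classical all_reals all_analysis.
Set Implicit Arguments. Unset Strict Implicit. Unset Printing Implicit Defensive.
Import Order.TTheory GRing.Theory Num.Theory.
Import numFieldNormedType.Exports.
Local Open Scope classical_set_scope.
Local Open Scope ring_scope.

(* Indices start at 0: the paper's c_1, c_2, ... are c 0, c 1, ... *)

Definition bernoulli_seq (R : realType) (d : measure_display)
  (T : measurableType d) (P : probability T R) (p : R) (beta : nat -> T -> R)
  : Prop :=
  (forall i, measurable_fun setT (beta i)) /\
  forall (s : seq nat) (b : nat -> bool), uniq s ->
    P (\bigcap_(i in [set` s]) [set w | beta i w = (b i)%:R]) =
    (\prod_(i <- s) (if b i then p else 1 - p))%:E.

Definition stake_seq (R : realType) (c : nat -> R) : Prop :=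
  (forall i, 0 <= c i) /\ (forall i, c i.+1 <= c i) /\
  (series c @ \oo --> (1 : R)).

Definition S_gamma (R : realType) (T : Type) (c : nat -> R)
  (beta : nat -> T -> R) (w : T) : R :=
  limn (series (fun i => c i * beta i w)).

Definition pi_val (R : realType) (d : measure_display) (T : measurableType d)
  (P : probability T R) (beta : nat -> T -> R) (t : R) : \bar R :=
  ereal_sup [set P [set w | t <= S_gamma c beta w] | c in @stake_seq R].

Definition bold_play (R : realType) (t : R) : nat -> R :=
  fun i => if (i < Num.truncn t^-1)%N then ((Num.truncn t^-1)%:R)^-1 else 0.

(* For finitely many stakes cs, let Q(cs, t) = win_prob p cs t be the chance that
   sum_i cs_i beta_i >= t.  Induction on cs shows that
   p Q(cs, t1) + (1 - p) Q(cs, t2) <= p whenever t1 <= t2 and sum cs < t1 + t2: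
   this is where p <= 1/2 enters.  Conditioning on the first bet then bounds
   P(c_1 beta_1 + ... + c_N beta_N >= th) by p + (1 - p) p for every th slightly
   below 1/2, because the later stakes sum to at most 1 - c_1 < 2 th.  Off the
   null event where some beta_i is not 0 or 1 the partial sums increase to S,
   so continuity from below bounds P(S >= 1/2), and bold play c_1 = c_2 = 1/2
   attains the bound. *)

From HB Require Import structures.
From mathcomp Require Import all_boot all_order all_algebra.
From mathcomp Require Import all_classical all_reals all_analysis.
From mathcomp Require Import ring lra.
Set Implicit Arguments. Unset Strict Implicit. Unset Printing Implicit Defensive.
Import Order.TTheory GRing.Theory Num.Theory.
Import numFieldNormedType.Exports.
Local Open Scope classical_set_scope.
Local Open Scope ring_scope.

Section WinProb.
Variables (R : realType) (p : R).
Hypotheses (p_ge0 : 0 <= p) (p_le1 : p <= 1).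

Fixpoint win_prob (cs : seq R) (t : R) : R :=
  match cs with
  | [::] => if t <= 0 then 1 else 0
  | c :: cs' => p * win_prob cs' (t - c) + (1 - p) * win_prob cs' t
  end.

Lemma win_prob_le1 cs t : win_prob cs t <= 1.
Proof.
elim: cs t => [|c cs IH] t /=; first by case: ifP.
have h1 : 0 <= p * (1 - win_prob cs (t - c)) by rewrite mulr_ge0 ?subr_ge0.
have h2 : 0 <= (1 - p) * (1 - win_prob cs t) by rewrite mulr_ge0 ?subr_ge0.
lra.
Qed.

Lemma le_win_prob cs t t' : t <= t' -> win_prob cs t' <= win_prob cs t.
Proof.
elim: cs t t' => [|c cs IH] t t' tt' /=.
  case: ifP => [t'0|_]; last by case: ifP.
  by rewrite (le_trans tt' t'0).
by rewrite lerD // ler_wpM2l ?subr_ge0 // IH // lerB.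
Qed.

Lemma win_prob_mix_le (p_le_half : p <= 1 / 2) (cs : seq R) : all (>= 0) cs ->
  forall t1 t2 : R, t1 <= t2 -> \sum_(c <- cs) c < t1 + t2 ->
  p * win_prob cs t1 + (1 - p) * win_prob cs t2 <= p.
Proof.
elim: cs => [|c cs IH] /=.
  move=> _ t1 t2 t12; rewrite big_nil => t12_gt0.
  rewrite [X in (1 - p) * X]ifF; last by apply: negbTE; rewrite -ltNge; lra.
  by rewrite mulr0 addr0; case: ifP; rewrite ?mulr1 ?mulr0.
move=> /andP[c_ge0 cs_ge0] t1 t2 t12; rewrite big_cons => sum_lt.
(* Regrouping the four terms crosswise costs (1 - p) (1 - 2p) e with e >= 0. *)
have mix (x y e : R) : x <= p -> y <= p -> 0 <= e ->
    p * x + (1 - p) * y - (1 - p) * (1 - 2 * p) * e <= p.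
  move=> xp yp e0.
  have : 0 <= (1 - p) * (1 - 2 * p) * e by rewrite !mulr_ge0 // subr_ge0; lra.
  have : 0 <= p * (p - x) by rewrite mulr_ge0 // subr_ge0.
  have : 0 <= (1 - p) * (p - y) by rewrite mulr_ge0 // subr_ge0.
  lra.
have IH1 := IH cs_ge0 (t1 - c) t2 ltac:(lra) ltac:(lra).
have [t1c|ct1] := lerP t1 (t2 - c).
  have IH2 := IH cs_ge0 t1 (t2 - c) t1c ltac:(lra).
  have mono : win_prob cs t2 <= win_prob cs (t2 - c) by apply: le_win_prob; lra.
  have := mix _ _ _ IH1 IH2 (ltac:(lra) : 0 <= win_prob cs (t2 - c) - win_prob cs t2).
  lra.
have IH2 := IH cs_ge0 (t2 - c) t1 ltac:(lra) ltac:(lra).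
have mono := le_win_prob cs t12.
have := mix _ _ _ IH1 IH2 (ltac:(lra) : 0 <= win_prob cs t1 - win_prob cs t2).
lra.
Qed.

Lemma win_prob_le_p (p_le_half : p <= 1 / 2) (cs : seq R) (t : R) :
  all (>= 0) cs -> \sum_(c <- cs) c < t + t -> win_prob cs t <= p.
Proof.
by move=> cs_ge0 /(win_prob_mix_le p_le_half cs_ge0 (lexx t)); rewrite -mulrDl subrKC mul1r.
Qed.

Lemma win_prob_cons_le (p_le_half : p <= 1 / 2) (c : R) (cs : seq R) (t : R) :
  all (>= 0) cs -> \sum_(x <- cs) x < t + t ->
  win_prob (c :: cs) t <= p + (1 - p) * p.
Proof.
move=> cs_ge0 /(win_prob_le_p p_le_half cs_ge0) le_p /=.
by rewrite lerD ?ler_wpM2l ?subr_ge0 // ler_piMr // win_prob_le1.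
Qed.

End WinProb.

Section Events.
Variables (R : realType) (T : Type) (beta : nat -> T -> R).

Definition binary_at (i : nat) : set T := [set w | beta i w = 0 \/ beta i w = 1].

Definition cylinder (ks : seq nat) (b : nat -> bool) : set T :=
  \bigcap_(i in [set` ks]) [set w | beta i w = (b i)%:R].

Definition win_event (c : nat -> R) (js : seq nat) (t : R) : set T :=
  (\bigcap_(j in [set` js]) binary_at j) `&`
  [set w | t <= \sum_(j <- js) c j * beta j w].

Lemma cylinder_nil (b : nat -> bool) : cylinder [::] b = setT.
Proof. by apply/seteqP; split => // w _ i; rewrite /= in_nil. Qed.

Lemma cylinder_cons (k : nat) (ks : seq nat) (b : nat -> bool) :
  cylinder (k :: ks) b = [set w | beta k w = (b k)%:R] `&` cylinder ks b.
Proof.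
apply/seteqP; split => [w Cw|w [Bk Cw] i]; first split.
- by apply: Cw; rewrite /= mem_head.
- by move=> i ki; apply: Cw; rewrite /= in_cons ki orbT.
- by rewrite /= in_cons => /orP[/eqP->|/Cw].
Qed.

Lemma eq_cylinder (ks : seq nat) (b b' : nat -> bool) :
  {in ks, b =1 b'} -> cylinder ks b = cylinder ks b'.
Proof.
move=> bb'; apply/seteqP; split => w Cw i ki /=.
  by rewrite -(bb' i ki); exact: Cw.
by rewrite (bb' i ki); exact: Cw.
Qed.

Lemma win_event_nil (c : nat -> R) (t : R) :
  win_event c [::] t = if t <= 0 then setT else set0.
Proof.
apply/seteqP; split => [w [_]|w]; first by rewrite /= big_nil; case: ifP => // ->.
case: ifP => // t_le0 _; split; first by move=> i; rewrite /= in_nil.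
by rewrite /= big_nil.
Qed.

Lemma win_event_cons (c : nat -> R) (j : nat) (js : seq nat) (t : R) :
  win_event c (j :: js) t =
  ([set w | beta j w = 1] `&` win_event c js (t - c j)) `|`
  ([set w | beta j w = 0] `&` win_event c js t).
Proof.
rewrite /win_event; apply/seteqP; split => w.
  move=> [bin]; rewrite /= big_cons => t_le.
  have bin_js : (\bigcap_(i in [set` js]) binary_at i) w.
    by move=> i i_js; apply: bin; rewrite /= in_cons i_js orbT.
  have [bj0|bj1] := bin j (mem_head _ _).
    by right; split => //; split => //; rewrite bj0 mulr0 add0r in t_le.
  by left; split => //; split => //=; rewrite lerBlDl; rewrite bj1 mulr1 in t_le.
have bin_cons : binary_at j w ->
    (\bigcap_(i in [set` js]) binary_at i) w ->
    (\bigcap_(i in [set` j :: js]) binary_at i) w.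
  by move=> bj bin i; rewrite /= in_cons => /orP[/eqP->|/bin].
move=> [[bj [bin t_le]]|[bj [bin t_le]]]; split; rewrite /= ?big_cons.
- by apply: bin_cons bin; right.
- by rewrite bj mulr1 -lerBlDl.
- by apply: bin_cons bin; left.
- by rewrite bj mulr0 add0r.
Qed.

End Events.

Lemma cvgn_cauchyP (R : realType) (u : R ^nat) :
  cvgn u <-> forall k : nat, exists N, forall m, (N <= m)%N ->
    `|u N - u m| < k.+1%:R^-1.
Proof.
split.
  move=> /cvg_cauchy /cauchyP u_cauchy k.
  have e_gt0 : 0 < k.+1%:R^-1 / 2 :> R by rewrite divr_gt0 // invr_gt0 ltr0n.
  have [x [N _ uN]] := u_cauchy _ e_gt0.
  exists N => m Nm; have := uN N (leqnn N); have := uN m Nm.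
  rewrite -!ball_normE /= => xm xN.
  rewrite (_ : u N - u m = (x - u m) - (x - u N)); last by ring.
  by rewrite (le_lt_trans (ler_normB _ _)) // [ltRHS]splitr ltrD.
move=> u_cauchy; apply/cauchy_cvgP/cauchyP => e e_gt0.
have [N uN] := u_cauchy (Num.truncn e^-1).
exists (u N); exists N => // m Nm /=; rewrite -ball_normE /=.
apply: lt_trans (uN m Nm) _.
by rewrite -[ltRHS]invrK ltf_pV2 ?posrE ?invr_gt0 ?ltr0n //; exact: truncnS_gt.
Qed.

Section MeasurableSets.
Variables (R : realType) (d : measure_display) (T : measurableType d).

Lemma measurable_eq (f : T -> R) (r : R) :
  measurable_fun setT f -> measurable [set w | f w = r].
Proof.
by move=> mf; rewrite -[X in measurable X]setTI; exact: mf _ _ (measurable_set1 r).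
Qed.

Lemma measurable_ge (f : T -> R) (r : R) :
  measurable_fun setT f -> measurable [set w | r <= f w].
Proof.
by move=> mf; rewrite -[X in measurable X]setTI; exact: measurable_fun_le.
Qed.

Lemma measurable_lt (f : T -> R) (r : R) :
  measurable_fun setT f -> measurable [set w | f w < r].
Proof.
move=> mf; rewrite (_ : [set w | f w < r] = ~` [set w | r <= f w]).
  exact/measurableC/measurable_ge.
by apply/seteqP; split => w /=; rewrite ltNge => /negP.
Qed.

Lemma measurable_cvgn_set (s : (T -> R)^nat) :
  (forall N, measurable_fun setT (s N)) -> measurable [set w | cvgn (s ^~ w)].
Proof.
move=> ms; have -> : [set w | cvgn (s ^~ w)] =
    \bigcap_k \bigcup_N \bigcap_(m in [set m | (N <= m)%N])
      [set w | `|s N w - s m w| < k.+1%:R^-1].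
  apply/seteqP; split => w.
    by move=> /cvgn_cauchyP sw k _; have [N sN] := sw k; exists N => // m /sN.
  move=> sw; apply/cvgn_cauchyP => k; have [N _ sN] := sw k I.
  by exists N => m Nm; exact: sN.
apply: bigcapT_measurable => k; apply: bigcupT_measurable => N.
apply: bigcap_measurableType => m _; apply: measurable_lt.
apply: measurableT_comp; first exact: measurable_realfun.normr_measurable.
exact: measurable_realfun.measurable_funB.
Qed.

Variable beta : nat -> T -> R.
Hypothesis mbeta : forall i, measurable_fun setT (beta i).

Lemma measurable_binary_at i : measurable (binary_at beta i).
Proof. by apply: measurableU; exact: measurable_eq. Qed.

Lemma measurable_cylinder ks b : measurable (cylinder beta ks b).
Proof. by apply: bigcap_measurableType => k _; exact: measurable_eq. Qed.

Lemma measurable_partial_sum (c : nat -> R) (js : seq nat) :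
  measurable_fun setT (fun w => \sum_(j <- js) c j * beta j w).
Proof. by apply: measurable_sum => j; exact: measurable_realfun.measurable_funM. Qed.

Lemma measurable_win_event c js t : measurable (win_event beta c js t).
Proof.
apply: measurableI; last exact/measurable_ge/measurable_partial_sum.
by apply: bigcap_measurableType => k _; exact: measurable_binary_at.
Qed.

Lemma measurable_S_gamma (c : nat -> R) : measurable_fun setT (S_gamma c beta).
Proof.
pose s N w := series (fun i => c i * beta i w) N.
have ms N : measurable_fun setT (s N) by exact: measurable_partial_sum.
have mC := measurable_cvgn_set ms.
rewrite -(setUv [set w | cvgn (s ^~ w)]).
apply/measurable_funU => //; first exact: measurableC.
split.
  apply: (measurable_realfun.measurable_fun_cvg (h := s)) => // m.
  exact: measurable_funS (ms m).
(* Off the convergence set, [limn] takes the default value [point]. *)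
apply: (@eq_measurable_fun _ _ _ _ _ (cst point)); last exact: measurable_cst.
move=> w; rewrite inE => nC /=; apply/esym.
rewrite /S_gamma /lim /lim_in getPN // => l sl; apply: nC.
exact: cvgP sl.
Qed.

End MeasurableSets.

Section MeasureBounds.
Variables (R : realType) (d : measure_display) (T : measurableType d).
Variable mu : {measure set T -> \bar R}.
Local Open Scope ereal_scope.

Lemma le_measure_negligibleU (A B N : set T) : measurable A -> measurable B ->
  mu.-negligible N -> A `<=` B `|` N -> mu A <= mu B.
Proof.
move=> mA mB [M [mM M0 NM]] ABN.
apply: le_trans (_ : mu (B `|` M) <= _).
  rewrite le_measure ?inE //; first exact: measurableU.
  by move=> x /ABN [Bx|/NM Mx]; [left|right].
by apply: le_trans (measureU2 _ mB mM) _; rewrite [X in _ + X](_ : _ = 0) ?adde0.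
Qed.

Lemma le_measure_bigcup_nondecreasing (F : (set T)^nat) (b : \bar R) :
  (forall n, measurable (F n)) -> nondecreasing_seq F ->
  (forall n, mu (F n) <= b) -> mu (\bigcup_n F n) <= b.
Proof.
move=> mF ndF Fb; have mU := bigcupT_measurable F mF.
have cvgF := nondecreasing_cvg_mu (mu := mu) mF mU ndF.
rewrite -(cvg_lim _ cvgF) //.
by apply: lime_le; [exact: cvgP cvgF|exact: nearW].
Qed.

End MeasureBounds.

Section Stakes.
Variables (R : realType) (c : nat -> R).
Hypothesis c_stake : stake_seq c.

Lemma stake_seq_series_le1 N : series c N <= 1.
Proof.
have [c_ge0 [_ c_sum]] := c_stake.
rewrite -(cvg_lim _ c_sum) //; apply: nondecreasing_cvgn_le; last exact: cvgP c_sum.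
by apply: nondecreasing_series => n _ _; exact: c_ge0.
Qed.

Lemma stake_seq_gt0 : 0 < c 0.
Proof.
have [c_ge0 [c_dec c_sum]] := c_stake.
have c_le0 i : c i <= c 0 by elim: i => // i; exact: le_trans (c_dec i).
rewrite lt_def c_ge0 andbT; apply/eqP => c0_eq0.
have sum0 : series c = fun=> 0.
  apply/funext => n; apply: big1 => i _.
  by apply/eqP; rewrite eq_le c_ge0 andbT -c0_eq0 c_le0.
have : limn (series c) = 1 by exact: cvg_lim.
by rewrite sum0 lim_cst // => /eqP; rewrite eq_sym oner_eq0.
Qed.

Variables (T : Type) (beta : nat -> T -> R) (w : T).
Hypothesis w_binary : forall i, binary_at beta i w.

Let stake_sum := series (fun i => c i * beta i w).

Lemma stake_sum_le_series N : stake_sum N <= series c N.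
Proof.
apply: ler_sum => i _.
by have [->|->] := w_binary i; rewrite ?mulr0 ?mulr1 ?c_stake.1.
Qed.

Lemma nondecreasing_stake_sum : nondecreasing_seq stake_sum.
Proof.
apply: nondecreasing_series => i _ _.
by have [->|->] := w_binary i; rewrite ?mulr0 ?mulr1 ?c_stake.1.
Qed.

Lemma lt_S_gamma_stake_sum (x : R) :
  x < S_gamma c beta w -> exists N, x <= stake_sum N.
Proof.
move=> x_lt; have cvg_sum : cvgn stake_sum.
  apply: nondecreasing_is_cvgn; first exact: nondecreasing_stake_sum.
  exists 1 => _ [N _ <-].
  exact: le_trans (stake_sum_le_series N) (stake_seq_series_le1 N).
have [N _ xN] := lt_lim nondecreasing_stake_sum cvg_sum x_lt.
by exists N; apply: xN => /=.
Qed.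

End Stakes.

Lemma win_prob_stakes_le (R : realType) (p : R) (c : nat -> R) (th : R) N :
  0 <= p -> p <= 1 / 2 -> stake_seq c -> 0 < th -> 1 - c 0 < th + th ->
  win_prob p (map c (index_iota 0 N)) th <= p + (1 - p) * p.
Proof.
move=> p_ge0 p_le_half c_stake th_gt0 th_big; have p_le1 : p <= 1 by lra.
rewrite /index_iota subn0; case: N => [|n] /=.
  rewrite ifF; last by apply: negbTE; rewrite -ltNge.
  by rewrite addr_ge0 // mulr_ge0 // subr_ge0.
apply: (win_prob_cons_le p_ge0 p_le1 p_le_half).
  by apply/allP => _ /mapP[i _ ->]; exact: c_stake.1.
have := stake_seq_series_le1 c_stake n.+1.
by rewrite /series /= /index_iota subn0 /= big_cons big_map; lra.
Qed.

Section FiniteStakes.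
Variables (R : realType) (n : nat) (f : nat -> R).
Hypothesis f_support : forall i, (n <= i)%N -> f i = 0.

Lemma series_finite_support m : (n <= m)%N -> series f m = series f n.
Proof.
move=> nm; rewrite /series /= (big_cat_nat _ nm) //= [X in _ + X]big_nat_cond.
by rewrite [X in _ + X]big1 ?addr0 // => i /andP[/andP[ni _] _]; exact: f_support.
Qed.

Lemma cvg_series_finite_support : series f @ \oo --> series f n.
Proof. by apply: cvg_near_cst; exists n => // m /series_finite_support. Qed.

End FiniteStakes.

Lemma S_gamma_finite_support (R : realType) (T : Type) (c : nat -> R)
    (beta : nat -> T -> R) (n : nat) (w : T) :
  (forall i, (n <= i)%N -> c i = 0) ->
  S_gamma c beta w = series (fun i => c i * beta i w) n.
Proof.
move=> c_support; apply: cvg_lim => //; apply: cvg_series_finite_support => i ni.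
by rewrite c_support ?mul0r.
Qed.

Lemma bold_play_half (R : realType) i :
  bold_play (1 / 2 : R) i = if (i < 2)%N then 1 / 2 else 0.
Proof.
rewrite /bold_play; have -> : Num.truncn (1 / 2 : R)^-1 = 2%N.
  by apply: truncn_def; rewrite div1r invrK ler_nat ltr_nat.
by rewrite div1r.
Qed.

Lemma bold_play_half_support (R : realType) i :
  (2 <= i)%N -> bold_play (1 / 2 : R) i = 0.
Proof. by move=> i_ge2; rewrite bold_play_half ltnNge i_ge2. Qed.

Lemma stake_seq_bold_play_half (R : realType) : stake_seq (bold_play (1 / 2 : R)).
Proof.
split; first by move=> i; rewrite bold_play_half; case: ifP => _; lra.
split; first by case=> [|[|i]]; rewrite !bold_play_half //=; lra.
have sum2 : series (bold_play (1 / 2 : R)) 2 = 1.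
  by rewrite /series /= !big_nat_recr //= big_nil !bold_play_half /=; lra.
rewrite -[X in _ --> X]sum2.
exact: cvg_series_finite_support (@bold_play_half_support R).
Qed.

Section BernoulliSequence.
Variables (R : realType) (d : measure_display) (T : measurableType d).
Variables (P : probability T R) (p : R) (beta : nat -> T -> R).
Hypothesis beta_bernoulli : bernoulli_seq P p beta.

Let mbeta : forall i, measurable_fun setT (beta i) := beta_bernoulli.1.

Lemma prob_cylinder_win_event (c : nat -> R) (js ks : seq nat)
    (b : nat -> bool) (t : R) : uniq (ks ++ js) ->
  P (cylinder beta ks b `&` win_event beta c js t) =
  ((\prod_(k <- ks) (if b k then p else 1 - p)) * win_prob p (map c js) t)%:E.
Proof.
elim: js ks b t => [|j js IH] ks b t.
  rewrite cats0 win_event_nil /= => uks; case: ifP => _.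
    by rewrite setIT mulr1; exact: beta_bernoulli.2.
  by rewrite setI0 measure0 mulr0.
move=> uks.
have uks' : uniq ((j :: ks) ++ js).
  by rewrite -(perm_uniq (permEl (perm_catCA ks [:: j] js))).
have j_notin : j \notin ks.
  by move: uks'; rewrite /= mem_cat negb_or => /andP[/andP[]].
pose bx (x : bool) i := if i == j then x else b i.
have bx_ks x : {in ks, bx x =1 b}.
  by move=> i iks; rewrite /bx ifN //; apply: contraNneq j_notin => <-.
have cylE (x : bool) (W : set T) :
    cylinder beta ks b `&` ([set w | beta j w = x%:R] `&` W) =
    cylinder beta (j :: ks) (bx x) `&` W.
  rewrite setIA [cylinder _ _ _ `&` _]setIC cylinder_cons /bx eqxx.
  by rewrite (eq_cylinder _ (bx_ks x)).
have prodE (x : bool) : \prod_(k <- j :: ks) (if bx x k then p else 1 - p) =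
    (if x then p else 1 - p) * \prod_(k <- ks) (if b k then p else 1 - p).
  by rewrite big_cons {1}/bx eqxx; congr (_ * _); apply: eq_big_seq => k /bx_ks ->.
rewrite win_event_cons setIUr (cylE true) (cylE false).
rewrite measureU.
- rewrite (congr2 _ (IH _ (bx true) (t - c j) uks') (IH _ (bx false) t uks')).
  by rewrite -EFinD !prodE /=; congr (_%:E); ring.
- by apply: measurableI; [exact: measurable_cylinder|exact: measurable_win_event].
- by apply: measurableI; [exact: measurable_cylinder|exact: measurable_win_event].
- apply/seteqP; split => // w [[C1 _] [C0 _]].
  move: (C1 j (mem_head _ _)) (C0 j (mem_head _ _)).
  by rewrite /= /bx eqxx => -> /eqP; rewrite oner_eq0.
Qed.

Lemma prob_binary_at (i : nat) : P (binary_at beta i) = 1%E.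
Proof.
have := prob_cylinder_win_event (fun=> 0) xpred0 0 (isT : uniq ([::] ++ [:: i])).
rewrite cylinder_nil setTI win_event_cons !win_event_nil subr0 lexx !setIT setUC.
by rewrite big_nil mul1r /= subr0 lexx !mulr1 subrKC.
Qed.

Lemma binary_ae : P.-negligible (~` \bigcap_i binary_at beta i).
Proof.
rewrite setC_bigcap; apply: negligible_bigcup => i.
apply/negligibleP; first exact/measurableC/measurable_binary_at.
apply: eq_trans (probability_setC _ (measurable_binary_at mbeta i)) _.
by rewrite prob_binary_at subee.
Qed.

Lemma prob_win_event (c : nat -> R) (js : seq nat) (t : R) : uniq js ->
  P (win_event beta c js t) = (win_prob p (map c js) t)%:E.
Proof.
move=> ujs; have := prob_cylinder_win_event c xpred0 t (ujs : uniq ([::] ++ js)).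
by rewrite cylinder_nil setTI big_nil mul1r.
Qed.

Lemma prob_S_gamma_ge_half_le (p_ge0 : 0 <= p) (p_le_half : p <= 1 / 2) (c : nat -> R) :
  stake_seq c -> (P [set w | (1 / 2 <= S_gamma c beta w)%R] <= (p + (1 - p) * p)%:E)%E.
Proof.
move=> c_stake; have c0_gt0 := stake_seq_gt0 c_stake.
pose D := \bigcap_i binary_at beta i.
(* A threshold strictly below 1/2, so that the partial sums reach it, yet above
   (1 - c 0) / 2, so that the stakes after the first one sum to less than 2 th. *)
pose th := 1 / 2 - c 0 / 4.
pose F N := D `&` [set w | th <= series (fun i => c i * beta i w) N].
have mD : measurable D by apply: bigcapT_measurable => i; exact: measurable_binary_at.
have mF N : measurable (F N).
  by apply: measurableI => //; apply/measurable_ge/measurable_partial_sum.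
apply: le_trans (le_measure_negligibleU _ (bigcupT_measurable F mF) binary_ae _) _.
- exact/measurable_ge/measurable_S_gamma.
- move=> w /= half_le; have [Dw|] := pselect (D w); last by right.
  have [|N thN] := lt_S_gamma_stake_sum c_stake (fun i => Dw i I) (x := th).
    by rewrite /th; lra.
  by left; exists N.
apply: le_measure_bigcup_nondecreasing => // [M N MN|N].
- apply/subsetPset => w [Dw thM]; split => //.
  exact: le_trans thM (nondecreasing_stake_sum c_stake (fun i => Dw i I) MN).
- have FN_sub : F N `<=` win_event beta c (index_iota 0 N) th.
    by move=> w [Dw thN]; split => // i _; exact: Dw.
  apply: (@le_trans _ _ (P (win_event beta c (index_iota 0 N) th))).
    by apply: le_measure FN_sub; rewrite inE //; exact: measurable_win_event.
  rewrite prob_win_event ?iota_uniq // lee_fin.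
  have c0_le1 : c 0 <= 1.
    by have := stake_seq_series_le1 c_stake 1; rewrite /series /= big_nat1.
  by apply: win_prob_stakes_le => //; rewrite /th; lra.
Qed.

Lemma prob_bold_play_half (p_ge0 : 0 <= p) (p_le_half : p <= 1 / 2) :
  P [set w | 1 / 2 <= S_gamma (bold_play (1 / 2 : R)) beta w] = (p + (1 - p) * p)%:E.
Proof.
apply/le_anti/andP; split.
  exact: prob_S_gamma_ge_half_le (stake_seq_bold_play_half R).
have win_sub : win_event beta (bold_play (1 / 2)) [:: 0%N; 1%N] (1 / 2) `<=`
    [set w | 1 / 2 <= S_gamma (bold_play (1 / 2 : R)) beta w].
  move=> w [_]; rewrite /= (S_gamma_finite_support beta w (@bold_play_half_support R)).
  by rewrite /series /= !big_nat_recr //= !big_cons big_nil big_nil add0r addr0.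
apply: le_trans (_ : P (win_event beta (bold_play (1 / 2)) [:: 0%N; 1%N] (1 / 2)) <= _)%E.
  rewrite prob_win_event // lee_fin /= !bold_play_half /=.
  by rewrite subrr lexx ifT ?ifF; [lra|apply: negbTE; rewrite -ltNge; lra|lra].
apply: le_measure win_sub; rewrite inE; first exact: measurable_win_event.
exact/measurable_ge/measurable_S_gamma.
Qed.

End BernoulliSequence.

Theorem corollary18 (R : realType) (d : measure_display) (T : measurableType d)
  (P : probability T R) (p : R) (beta : nat -> T -> R) :
  0 <= p -> p <= 1 / 2 -> bernoulli_seq P p beta ->
  pi_val P beta (1 / 2) = (p + (1 - p) * p)%:E /\
  stake_seq (bold_play (1 / 2 : R)) /\
  P [set w | 1 / 2 <= S_gamma (bold_play (1 / 2 : R)) beta w] = pi_val P beta (1 / 2) /\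
  (forall i, bold_play (1 / 2 : R) i = if (i < 2)%N then 1 / 2 else 0).
Proof.
move=> p_ge0 p_le_half beta_bernoulli.
have bold_stake := stake_seq_bold_play_half R.
have bold_prob := prob_bold_play_half beta_bernoulli p_ge0 p_le_half.
have pi_eq : pi_val P beta (1 / 2) = (p + (1 - p) * p)%:E.
  apply/le_anti/andP; split.
    apply: ge_ereal_sup => _ [c c_stake <-].
    exact: prob_S_gamma_ge_half_le beta_bernoulli p_ge0 p_le_half c c_stake.
  by rewrite -bold_prob; apply: ereal_sup_ubound; exists (bold_play (1 / 2)).
rewrite pi_eq bold_prob.
by split=> //; split=> //; split=> //; exact: bold_play_half.
Qed.
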